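(* Fix a diagram $D\subseteq[n]\times[n]$ and $k,l\in[n]$. Let $\{\widehat{C}^{(i)}\}_{i\in[m]}$ be diagrams with $\widehat{C}^{(i)}\le\widehat{D}$ for each $i$, and write $C^{(i)}=\widehat{C}^{(i)}_{\mathrm{aug}}$. If the polynomials $\Big\{\prod_{j\in[n]}\det\big(Y^{C^{(i)}_j}_{D_j}\big)\Big\}_{i\in[m]}$ are linearly dependent over $\mathbb{C}$, then so are the polynomials $\Big\{\prod_{j\in[n]\setminus\{l\}}\det\big(Y^{\widehat{C}^{(i)}_j}_{\widehat{D}_j}\big)\Big\}_{i\in[m]}$.
   Context: A diagram $D\subseteq[n]\times[n]$ is a set of boxes $(i,j)$ (row $i$, column $j$), identified with its column sequence $(D_1,\dots,D_n)$, $D_j=\{i:(i,j)\in D\}$. For $R,S\subseteq[n]$, $R\le S$ means $\#R=\#S$ and the $k$-th smallest element of $R$ is at most the $k$-th smallest element of $S$ for each $k$; for diagrams $C\le D$ means $C_j\le D_j$ for all $j$. $\widehat{C},\widehat{D}$ denote the diagrams obtained by removing all boxes in row $k$ or column $l$, and $\widehat{C}_{\mathrm{aug}}=\widehat{C}\cup\{(k,i):(k,i)\in D\}\cup\{(i,l):(i,l)\in D\}$. $Y$ is the $n\times n$ upper-triangular matrix with indeterminates $y_{ij}$ ($i\le j$) and zeros below the diagonal; $Y^R_S$ is its submatrix with rows $R$ and columns $S$; the determinant of an empty matrix is $1$. The polynomials live in $\mathbb{C}[y_{ij}: i\le j]$. *)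

From HB Require Import structures.
From mathcomp Require Import all_boot all_algebra.
From mathcomp Require Import reals.
From mathcomp Require Import complex.
From mathcomp Require Import mpoly.
Set Implicit Arguments. Unset Strict Implicit. Unset Printing Implicit Defensive.
Import GRing.Theory.
Local Open Scope ring_scope.

(* A diagram in [n] x [n]: a set of boxes (row, column), 0-indexed. *)
Definition diagram (n : nat) := {set 'I_n * 'I_n}.

Definition dcol n (D : diagram n) (j : 'I_n) : {set 'I_n} :=
  [set i | (i, j) \in D].

Definition sorted_elems n (R : {set 'I_n}) : seq nat :=
  sort leq [seq val x | x <- enum R].

Definition set_le n (R S : {set 'I_n}) : bool :=
  (#|R| == #|S|) &&
  all (fun k => nth 0%N (sorted_elems R) k <= nth 0%N (sorted_elems S) k)%N
      (iota 0 #|R|).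

Definition diag_le n (C D : diagram n) : bool :=
  [forall j, set_le (dcol C j) (dcol D j)].

Definition dhat n (k l : 'I_n) (D : diagram n) : diagram n :=
  [set p in D | (p.1 != k) && (p.2 != l)].

Definition daug n (k l : 'I_n) (D Chat : diagram n) : diagram n :=
  Chat :|: [set p in D | p.1 == k] :|: [set p in D | p.2 == l].

(* The polynomial ring C[y_ij] : one variable per pair (i,j), indexed by
   mxvec_index i j; only the variables with i <= j are used. *)
Notation ypoly R n := {mpoly (complex R)[n * n]}.

Definition Yent (R : realType) (n : nat) (i j : nat) : ypoly R n :=
  match @insub _ (fun x => x < n)%N 'I_n i, @insub _ (fun x => x < n)%N 'I_n j with
  | Some i', Some j' => if (i <= j)%N then 'X_(mxvec_index i' j') else 0
  | _, _ => 0
  end.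

(* det (Y^Rw_Cl) : the minor of Y with rows Rw and columns Cl (in increasing
   order); the determinant of the empty matrix is 1.  Only used when
   #Rw = #Cl (returns 0 otherwise, never happens in the statement). *)
Definition yminor (R : realType) n (Rw Cl : {set 'I_n}) : ypoly R n :=
  if #|Rw| == #|Cl| then
    \det (\matrix_(a < #|Cl|, b < #|Cl|)
           Yent R n (nth 0%N (sorted_elems Rw) a) (nth 0%N (sorted_elems Cl) b))
  else 0.

Definition lin_dependent (K : fieldType) (V : lmodType K) (m : nat)
    (p : 'I_m -> V) : Prop :=
  exists c : 'I_m -> K, (exists i, c i != 0) /\ \sum_(i < m) c i *: p i = 0.

From HB Require Import structures.
From mathcomp Require Import all_boot all_algebra.
From mathcomp Require Import reals.
From mathcomp Require Import complex.
From mathcomp Require Import mpoly.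
Import GRing.Theory.
Local Open Scope ring_scope.
Set Implicit Arguments. Unset Strict Implicit. Unset Printing Implicit Defensive.

(* Let phi be the substitution y_kc := 0 for c <> k.  In a minor whose row and
   column sets both contain k, row k then keeps only the entry y_kk, so Laplace
   expansion gives phi(det Y^(k + A)_(k + B)) = +-y_kk det Y^A_B, while minors
   whose rows avoid k are fixed by phi.  As the augmented column l is D_l itself,
   phi maps the i-th augmented product to a nonzero multiple of G times the i-th
   hatted product, where G = phi(det Y^(D_l)_(D_l)) * y_kk^(...) does not depend
   on i, and G <> 0 because phi(det Y^(D_l)_(D_l)) is 1 at the identity matrix.
   Applying the linear map phi to a dependence relation and cancelling G in the
   domain C[y] gives a dependence relation among the hatted products. *)

Definition nz_multiple (K : fieldType) (V : lmodType K) (u v : V) : Prop :=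
  exists2 e : K, e != 0 & u = e *: v.

Lemma nz_multiple_prod (K : fieldType) (A : algType K) (I : finType)
    (P : pred I) (F G : I -> A) :
  (forall i, P i -> nz_multiple (F i) (G i)) ->
  nz_multiple (\prod_(i | P i) F i) (\prod_(i | P i) G i).
Proof.
move=> FG; apply: (big_ind2 (@nz_multiple K A)) => //.
  by exists 1; rewrite ?oner_neq0 ?scale1r.
move=> x1 x2 y1 y2 [e1 e1_nz ->] [e2 e2_nz ->].
by exists (e1 * e2); rewrite ?mulf_neq0 // -scalerAl -scalerAr scalerA.
Qed.

Lemma lin_dependent_linear (K : fieldType) (U V : lmodType K)
    (f : {linear U -> V}) m (p : 'I_m -> U) (q : 'I_m -> V) :
  (forall i, nz_multiple (f (p i)) (q i)) -> lin_dependent p -> lin_dependent q.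
Proof.
move=> /fin_all_exists2[e e_nz fpq] [c [[i0 ci0] sum_cp]].
exists (fun i => c i * e i); split; first by exists i0; rewrite mulf_neq0.
transitivity (f (\sum_(i < m) c i *: p i)); last by rewrite sum_cp linear0.
rewrite linear_sum; apply: eq_bigr => i _.
by rewrite linearZ_LR fpq scalerA.
Qed.

Lemma lin_dependent_lreg (K : fieldType) (A : algType K) m (g : A)
    (q : 'I_m -> A) :
  GRing.lreg g -> lin_dependent (fun i => g * q i) -> lin_dependent q.
Proof.
move=> g_reg [c [c_nz sum_cgq]]; exists c; split => //.
apply: g_reg; rewrite mulr0 -[RHS]sum_cgq mulr_sumr.
by apply: eq_bigr => i _; rewrite scalerAr.
Qed.

Definition seq_insert (T : Type) (s : seq T) p x := take p s ++ x :: drop p s.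

Lemma nth_seq_insert (T : Type) (x0 : T) s p x a : (p <= size s)%N ->
  nth x0 (seq_insert s p x) (bump p a) = nth x0 s a.
Proof.
move=> p_le; rewrite nth_cat size_takel // /bump.
case: (leqP p a) => [pa|ap]; last by rewrite add0n ap nth_take.
by rewrite add1n ltnNge leqW //= subSn //= nth_drop subnKC.
Qed.

Lemma nth_seq_insert_at (T : Type) (x0 : T) s p x : (p <= size s)%N ->
  nth x0 (seq_insert s p x) p = x.
Proof. by move=> p_le; rewrite nth_cat size_takel // ltnn subnn. Qed.

Lemma sorted_seq_insert_find (s : seq nat) x : sorted leq s ->
  sorted leq (seq_insert s (find (fun y => x < y)%N s) x).
Proof.
set p := find _ s => s_sorted; have := s_sorted.
rewrite !(sorted_pairwise leq_trans) -{1}(cat_take_drop p s) !pairwise_cat.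
rewrite pairwise_cons allrel_consr => /and3P[-> -> ->]; rewrite !andbT /=.
apply/andP; split.
  apply/(all_nthP 0%N) => i; rewrite size_takel ?find_size // => ip.
  by rewrite nth_take // leqNgt (before_find _ ip).
apply/(all_nthP 0%N) => i; rewrite size_drop ltn_subRL nth_drop => ip.
have ps : (p < size s)%N := leq_ltn_trans (leq_addr _ _) ip.
have x_lt : (x < nth 0%N s p)%N by apply: (nth_find 0%N); rewrite has_find.
apply: leq_trans (ltnW x_lt) _.
by apply: (sorted_leq_nth leq_trans leqnn) (leq_addr i p); rewrite ?inE.
Qed.

Section SortedElems.
Variable n : nat.
Implicit Types A : {set 'I_n}.

Lemma size_sorted_elems A : size (sorted_elems A) = #|A|.
Proof. by rewrite size_sort size_map -cardE. Qed.

Lemma sorted_elems_uniq A : uniq (sorted_elems A).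
Proof. by rewrite sort_uniq (map_inj_uniq val_inj) enum_uniq. Qed.

Lemma perm_sorted_elems A : perm_eq (sorted_elems A) [seq val x | x <- enum A].
Proof. by rewrite perm_sort. Qed.

Lemma nth_sorted_elems A a : (a < #|A|)%N ->
  exists2 x, x \in A & nth 0%N (sorted_elems A) a = val x.
Proof.
rewrite -size_sorted_elems => /(mem_nth 0%N).
by rewrite (perm_mem (perm_sorted_elems A)) => /mapP[x]; rewrite mem_enum; exists x.
Qed.

Lemma sorted_elems_setU1 A (k : 'I_n) : k \notin A ->
  exists2 p, (p <= #|A|)%N &
    sorted_elems (k |: A) = seq_insert (sorted_elems A) p k.
Proof.
move=> kA; set s := sorted_elems A; set p := find (fun x => k < x)%N s.
exists p; first by rewrite -size_sorted_elems find_size.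
apply: (sorted_eq leq_trans anti_leq); first exact: sort_sorted leq_total _.
  exact/sorted_seq_insert_find/sort_sorted/leq_total.
rewrite (permPl (perm_sorted_elems _)) perm_sym /seq_insert -cat1s perm_catCA.
rewrite cat_take_drop.
rewrite (permPl (_ : perm_eq (val k :: s) (map val (k :: enum A)))).
  apply/perm_map/uniq_perm => [||x]; rewrite /= ?mem_enum ?kA ?enum_uniq //.
  by rewrite in_cons !mem_enum in_setU1.
by rewrite /= perm_cons perm_sorted_elems.
Qed.

End SortedElems.

Lemma expand_det_row_single (T : comNzRingType) N (M : 'M[T]_N.+1)
    (p q : 'I_N.+1) :
  (forall b, b != q -> M p b = 0) ->
  \det M = (-1) ^+ (p + q) * M p q * \det (row' p (col' q M)).
Proof.
move=> Mp0; rewrite (expand_det_row _ p) (bigD1 q) //= big1 ?addr0.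
  by rewrite /cofactor mulrCA mulrA.
by move=> b bq; rewrite Mp0 ?mul0r.
Qed.

Lemma eq_mxvec_index n (i j i' j' : 'I_n) :
  (mxvec_index i j == mxvec_index i' j') = (i == i') && (j == j').
Proof.
apply/eqP/andP => [/cast_ord_inj/enum_rank_inj[-> ->] //|[/eqP-> /eqP->] //].
Qed.

Section KillRow.
Variables (R : realType) (n : nat).
Implicit Types (k r c : 'I_n) (A B : {set 'I_n}).

Lemma YentE r c : Yent R n r c = if (r <= c)%N then 'X_(mxvec_index r c) else 0.
Proof. by rewrite /Yent !valK. Qed.

Definition kill_row k : (n * n).-tuple (ypoly R n) :=
  [tuple if [exists c, (c != k) && (v == mxvec_index k c)] then 0 else 'X_v
   | v < n * n].

Lemma kill_row_Yent k r c :
  Yent R n r c \mPo kill_row k = if (r == k) && (c != k) then 0 else Yent R n r c.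
Proof.
rewrite YentE; case: leqP => [rc|_]; last by rewrite comp_mpoly0 if_same.
rewrite comp_mpolyXU -tnth_nth tnth_mktuple; congr (if _ then _ else _).
apply/existsP/andP => [[c' /andP[c'k]]|[/eqP-> ck]]; last first.
  by exists c; rewrite ck eq_mxvec_index !eqxx.
by rewrite eq_mxvec_index => /andP[/eqP-> /eqP->].
Qed.

Definition identity_point : 'I_(n * n) -> complex R :=
  fun v => [exists i, v == mxvec_index i i]%:R.

Lemma meval_kill_row_Yent k r c :
  (Yent R n r c \mPo kill_row k).@[identity_point] = (r == c)%:R.
Proof.
have Y_diag : (Yent R n r c).@[identity_point] = (r == c)%:R.
  rewrite YentE; case: leqP => [rc|cr]; last by rewrite meval0 -val_eqE gtn_eqF.
  rewrite mevalXU /identity_point; congr (GRing.natmul 1 (nat_of_bool _)).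
  apply/existsP/idP => [[i']|/eqP ->]; last by exists c.
  by rewrite eq_mxvec_index => /andP[/eqP-> /eqP->].
rewrite kill_row_Yent; case: ifP => [/andP[/eqP-> /negPf ck]|_]; last exact: Y_diag.
by rewrite meval0 eq_sym ck.
Qed.

Lemma yminor_kill_row_notin k A B :
  k \notin A -> yminor R A B \mPo kill_row k = yminor R A B.
Proof.
rewrite /yminor; case: eqP => [AB kA|_ _]; last by rewrite comp_mpoly0.
rewrite -det_map_mx; congr (\det _); apply/matrixP => a b; rewrite !mxE.
have [|x xA ->] := nth_sorted_elems (A := A) (a := a); first by rewrite AB.
have [y _ ->] := nth_sorted_elems (ltn_ord b).
change (Yent R n x y \mPo kill_row k = Yent R n x y).
by rewrite kill_row_Yent; case: eqP => // xk; rewrite -xk xA in kA.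
Qed.

Lemma yminor_kill_row_diag_neq0 k A : yminor R A A \mPo kill_row k != 0.
Proof.
have meval_one : (yminor R A A \mPo kill_row k).@[identity_point] = 1.
  rewrite /yminor eqxx -det_map_mx -det_map_mx -[RHS](det1 _ #|A|).
  congr (\det _); apply/matrixP => a b; rewrite !mxE.
  have [x _ xE] := nth_sorted_elems (ltn_ord a).
  have [y _ yE] := nth_sorted_elems (ltn_ord b).
  rewrite xE yE.
  change ((Yent R n x y \mPo kill_row k).@[identity_point] = (a == b)%:R).
  rewrite meval_kill_row_Yent; congr (GRing.natmul 1 (nat_of_bool _)).
  by rewrite -val_eqE -xE -yE nth_uniq ?size_sorted_elems ?sorted_elems_uniq.
by apply: contra_eq_neq meval_one => ->; rewrite meval0 eq_sym oner_neq0.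
Qed.

End KillRow.

Section KillRowSetU1.
Variables (R : realType) (n : nat) (k : 'I_n) (A B : {set 'I_n}).
Hypotheses (kA : k \notin A) (kB : k \notin B).

Lemma yminor_kill_row_setU1 :
  nz_multiple (yminor R (k |: A) (k |: B) \mPo kill_row R k)
              ('X_(mxvec_index k k) * yminor R A B).
Proof.
rewrite /yminor !cardsU1 kA kB eqSS; case: eqP => AB; last first.
  by exists 1; rewrite ?oner_neq0 // comp_mpoly0 mulr0 scaler0.
have [p pA ->] := sorted_elems_setU1 kA; have [q qB ->] := sorted_elems_setU1 kB.
rewrite -det_map_mx; set M := \matrix_(a, b) _.
have sA : (p <= size (sorted_elems A))%N by rewrite size_sorted_elems.
have sB : (q <= size (sorted_elems B))%N by rewrite size_sorted_elems.
have p' : (p < #|B|.+1)%N by rewrite ltnS -AB.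
have q' : (q < #|B|.+1)%N by rewrite ltnS.
have Mk_pq : map_mx (comp_mpoly (kill_row R k)) M (Ordinal p') (Ordinal q') =
    'X_(mxvec_index k k).
  rewrite !mxE /= (nth_seq_insert_at 0%N k sA) (nth_seq_insert_at 0%N k sB).
  by rewrite kill_row_Yent eqxx YentE leqnn.
rewrite (expand_det_row_single (p := Ordinal p') (q := Ordinal q')); last first.
  move=> b; case: (unliftP (Ordinal q') b) => [b' ->|->]; last by rewrite eqxx.
  move=> _; rewrite !mxE /= (nth_seq_insert_at 0%N k sA).
  rewrite (nth_seq_insert 0%N _ _ sB).
  have [y yB ->] := nth_sorted_elems (ltn_ord b').
  change (Yent R n k y \mPo kill_row R k = 0).
  by rewrite kill_row_Yent eqxx; case: eqP yB => // ->; rewrite (negPf kB).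
set N := \matrix_(a, b) Yent R n (nth 0%N (sorted_elems A) a) _.
have minor_AB : row' (Ordinal p') (col' (Ordinal q') M) = N.
  apply/matrixP => a b.
  by rewrite !mxE /= (nth_seq_insert 0%N _ _ sA) (nth_seq_insert 0%N _ _ sB).
have kill_N : \det (map_mx (comp_mpoly (kill_row R k)) N) = \det N.
  by have := yminor_kill_row_notin R B kA; rewrite /yminor AB eqxx det_map_mx.
rewrite -map_col' -map_row' minor_AB kill_N Mk_pq.
exists ((-1) ^+ (p + q)); first by rewrite signr_eq0.
by rewrite -mulrA -mulr_algl -[X in X * _](rmorph_sign (in_alg (ypoly R n))).
Qed.

End KillRowSetU1.

Lemma mpolyXU_neq0 (K : nzRingType) n (i : 'I_n) : 'X_i != 0 :> {mpoly K[n]}.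
Proof.
apply/eqP => /(congr1 (mcoeff U_(i))).
by rewrite mcoeffXU eqxx mcoeff0 => /eqP; rewrite oner_eq0.
Qed.

Lemma dcol_dhat n (D : diagram n) (k l j : 'I_n) : j != l ->
  dcol D j =
  if (k, j) \in D then k |: dcol (dhat k l D) j else dcol (dhat k l D) j.
Proof.
move=> jl; apply/setP => x; case: ifP => kjD; rewrite !inE /= jl andbT;
  by case: (eqVneq x k) => [->|]; rewrite ?kjD ?andbT ?andbF.
Qed.

Section Augmentation.
Variables (R : realType) (n : nat) (D Ch : diagram n) (k l : 'I_n).
Hypothesis Ch_avoid : forall p, p \in Ch -> (p.1 != k) && (p.2 != l).

Lemma row_notin_dcol j : k \notin dcol Ch j.
Proof. by rewrite inE; apply/negP => /Ch_avoid; rewrite eqxx. Qed.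

Lemma dcol_daug_l : dcol (daug k l D Ch) l = dcol D l.
Proof.
apply/setP => x; rewrite !inE /= eqxx andbT.
case xlCh: ((x, l) \in Ch); first by have := Ch_avoid xlCh; rewrite eqxx andbF.
by case: ((x, l) \in D); rewrite ?orbT ?andbF.
Qed.

Lemma dcol_daug j : j != l ->
  dcol (daug k l D Ch) j = if (k, j) \in D then k |: dcol Ch j else dcol Ch j.
Proof.
move=> jl; apply/setP => x; rewrite !inE /= (negPf jl) andbF orbF.
case: ifP => kjD; rewrite !inE;
  by case: (eqVneq x k) => [->|]; rewrite ?kjD ?andbF ?orbF ?orbT.
Qed.

Definition daug_common_factor : ypoly R n :=
  (yminor R (dcol D l) (dcol D l) \mPo kill_row R k) *
  \prod_(j < n | j != l) (if (k, j) \in D then 'X_(mxvec_index k k) else 1).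

Lemma daug_common_factor_neq0 : daug_common_factor != 0.
Proof.
rewrite mulf_neq0 ?yminor_kill_row_diag_neq0 //; apply/prodf_neq0 => j _.
by case: ifP => _; rewrite ?mpolyXU_neq0 ?oner_neq0.
Qed.

Lemma yminor_daug_kill_row j : j != l ->
  nz_multiple (yminor R (dcol (daug k l D Ch) j) (dcol D j) \mPo kill_row R k)
    ((if (k, j) \in D then 'X_(mxvec_index k k) else 1) *
     yminor R (dcol Ch j) (dcol (dhat k l D) j)).
Proof.
move=> jl; have kCh := row_notin_dcol j.
have kDhat : k \notin dcol (dhat k l D) j by rewrite !inE eqxx andbF.
rewrite (dcol_daug jl) (dcol_dhat D k jl); case: ifP => _.
  exact: yminor_kill_row_setU1.
by exists 1; rewrite ?oner_neq0 // mul1r scale1r yminor_kill_row_notin.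
Qed.

Lemma prod_yminor_daug_kill_row :
  nz_multiple
    ((\prod_(j < n) yminor R (dcol (daug k l D Ch) j) (dcol D j)) \mPo kill_row R k)
    (daug_common_factor *
     \prod_(j < n | j != l) yminor R (dcol Ch j) (dcol (dhat k l D) j)).
Proof.
rewrite rmorph_prod (bigD1 l) //= dcol_daug_l.
have [e e_nz ->] := nz_multiple_prod yminor_daug_kill_row.
by exists e; rewrite // -scalerAr big_split /= mulrA.
Qed.

End Augmentation.

Theorem lemma5p7 (R : realType) (n : nat) (D : diagram n) (k l : 'I_n)
    (m : nat) (Chat : 'I_m -> diagram n) :
  (forall i, diag_le (Chat i) (dhat k l D)) ->
  (forall i p, p \in Chat i -> (p.1 != k) && (p.2 != l)) ->
  lin_dependent (fun i : 'I_m =>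
    \prod_(j < n) yminor R (dcol (daug k l D (Chat i)) j) (dcol D j)) ->
  lin_dependent (fun i : 'I_m =>
    \prod_(j < n | j != l)
       yminor R (dcol (Chat i) j) (dcol (dhat k l D) j)).
Proof.
move=> _ Chat_avoid dep.
apply: (@lin_dependent_lreg _ _ _ (daug_common_factor R D k l)).
  exact/mulfI/daug_common_factor_neq0.
apply: lin_dependent_linear dep => i.
exact: prod_yminor_daug_kill_row (Chat_avoid i).
Qed.
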